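(* For every $n\ge1$, the transitive tournament $I_n$ has exactly $F_n$ matching orderings, where $F_0=F_1=1$ and $F_i=F_{i-1}+F_{i-2}$ for $i\ge2$.
   Context: A tournament is a finite, non-null, loopless directed graph in which for any two distinct vertices $u,v$ there is exactly one edge with both ends in $\{u,v\}$; write $u\to v$ for the edge from $u$ to $v$. $I_n$ is the transitive tournament on $n$ vertices, i.e. vertices $v_1,\dots,v_n$ with $v_i\to v_j$ whenever $i<j$. Given an ordering of the vertices, a backedge is an edge from a later vertex to an earlier one; the ordering is a matching ordering if every vertex is the head or tail of at most one backedge. *)

From mathcomp Require Import all_boot all_fingroup.
Set Implicit Arguments. Unset Strict Implicit. Unset Printing Implicit Defensive.

Definition is_tournament (T : finType) (E : rel T) : Prop :=
  (forall u, ~~ E u u) /\ (forall u v, u != v -> E u v (+) E v u).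

Definition transitive_tournament (n : nat) : rel 'I_n := fun i j => (i < j)%N.
Arguments transitive_tournament n : clear implicits.

(* An ordering of the vertices of a graph on 'I_n is a permutation sigma,
   where sigma k is the vertex placed at position k; the position of vertex v
   is thus sigma^-1 v. *)
Definition position (n : nat) (sigma : 'S_n) (v : 'I_n) : 'I_n := (sigma^-1)%g v.

Definition backedge (n : nat) (E : rel 'I_n) (sigma : 'S_n) (u v : 'I_n) : bool :=
  E u v && (position sigma v < position sigma u)%N.

Definition matching_ordering (n : nat) (E : rel 'I_n) (sigma : 'S_n) : bool :=
  [forall v : 'I_n,
     #|[set e : 'I_n * 'I_n | backedge E sigma e.1 e.2 && ((e.1 == v) || (e.2 == v))]|
       <= 1]%N.

Fixpoint fib (n : nat) : nat :=
  match n with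
  | 0 => 1
  | S m => match m with 0 => 1 | S k => fib m + fib k end
  end.

From mathcomp Require Import all_boot all_fingroup zify.

Set Implicit Arguments.
Unset Strict Implicit.
Unset Printing Implicit Defensive.

(* Write p for the position map sigma^-1, so that the backedges of I_n are the
   inversions of p.  Counting the values below p i shows that p i exceeds i by
   at most the number of inversions (i, j) with i < j, and symmetrically; in a
   matching ordering every vertex lies on at most one inversion, so
   |p i - i| <= 1 and p is a product of disjoint transpositions of adjacent
   positions.  These are encoded by the boolean sequences marking the swapped
   pairs (k, k+1): no two consecutive entries are true and the last is false.
   Splitting on the first entry gives the Fibonacci recursion for their number. *)

(* [nth false b k] means that positions k and k+1 are exchanged. *)
Definition swap_pattern (b : seq bool) : Prop :=
  forall k, nth false b k -> (k.+1 < size b) && ~~ nth false b k.+1.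

Lemma swap_pattern_nil : swap_pattern [::].
Proof. by move=> k; rewrite nth_nil. Qed.

Lemma swap_pattern_false s : swap_pattern (false :: s) <-> swap_pattern s.
Proof. by split=> [sw_s k /(sw_s k.+1) | sw_s [|k] // /sw_s]. Qed.

Lemma swap_pattern_true b :
  swap_pattern (true :: b) <-> exists2 s, b = false :: s & swap_pattern s.
Proof.
split=> [sw_b | [s -> sw_s] [|[|k]] // /sw_s //].
case: b sw_b => [|[] s] sw_b; try by have := sw_b 0 isT.
by exists s => // k /(sw_b k.+2).
Qed.

Fixpoint swap_patterns (n : nat) : seq (seq bool) :=
  match n with
  | 0 => [:: [::]]
  | 1 => [:: [:: false]]
  | (k.+1 as m).+1 =>
      map (cons false) (swap_patterns m) ++ map (cat [:: true; false]) (swap_patterns k)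
  end.

Lemma swap_patternsSS k : swap_patterns k.+2 =
  map (cons false) (swap_patterns k.+1) ++ map (cat [:: true; false]) (swap_patterns k).
Proof. by []. Qed.

Lemma size_swap_patterns n : size (swap_patterns n) = fib n.
Proof.
elim/ltn_ind: n => -[|[|k]] IH //.
by rewrite swap_patternsSS size_cat !size_map !IH.
Qed.

Lemma mem_swap_patterns n b :
  b \in swap_patterns n <-> size b = n /\ swap_pattern b.
Proof.
elim/ltn_ind: n b => -[|[|k]] IH b.
- rewrite inE; split=> [/eqP -> | [/size0nil -> _] //].
  by split=> //; exact: swap_pattern_nil.
- rewrite inE; split=> [/eqP -> | ].
    by split=> //; apply/swap_pattern_false/swap_pattern_nil.
  by case: b => [|[] [|c b]] // [] // _ /swap_pattern_true [].
have [IH1 IH0] := (IH k.+1 (ltnSn _), IH k (leqW (ltnSn _))).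
rewrite swap_patternsSS mem_cat; split.
  case/orP=> [/mapP [s /IH1 [sz_s sw_s] ->] | /mapP [s /IH0 [sz_s sw_s] ->]] /=.
    by rewrite sz_s swap_pattern_false.
  by rewrite sz_s; split=> //; apply/swap_pattern_true; exists s.
case: b => [[] // | [] b [[sz_b] sw_b]]; apply/orP.
  case/swap_pattern_true: sw_b sz_b => s -> sw_s [sz_s].
  by right; apply/mapP; exists s => //; apply/IH0.
by left; apply/mapP; exists b => //; apply/IH1; rewrite -swap_pattern_false.
Qed.

Lemma uniq_swap_patterns n : uniq (swap_patterns n).
Proof.
elim/ltn_ind: n => -[|[|k]] IH //.
rewrite swap_patternsSS cat_uniq !map_inj_uniq ?IH //; try by move=> s t [].
by rewrite andbT; apply/hasPn => _ /mapP [s _ ->]; apply/mapP => -[].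
Qed.

Definition pattern_map (b : seq bool) (i : nat) : nat :=
  if nth false b i then i.+1 else if (0 < i) && nth false b i.-1 then i.-1 else i.

Lemma nth_pattern_map b k : nth false b k = (pattern_map b k == k.+1).
Proof.
rewrite /pattern_map; case: (nth false b k); first by rewrite eqxx.
by case: ifP => _; apply/esym/eqP; lia.
Qed.

Lemma pattern_map_lt b i : swap_pattern b -> i < size b -> pattern_map b i < size b.
Proof.
move=> sw_b lt_i; rewrite /pattern_map; case: ifP => [/sw_b /andP [] // | _].
by case: ifP => _; lia.
Qed.

Lemma pattern_mapK b : swap_pattern b -> involutive (pattern_map b).
Proof.
move=> sw_b i; rewrite /pattern_map.
case b_i: (nth false b i).
  by move: (sw_b i b_i) => /andP [_ /negbTE ->] /=; rewrite b_i.
case b_i1: ((0 < i) && nth false b i.-1); last by rewrite b_i b_i1.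
by case/andP: b_i1 => lt0i ->; rewrite prednK.
Qed.

Lemma pattern_map_inversion b a c :
  a < c -> pattern_map b c < pattern_map b a -> c = a.+1 /\ nth false b a.
Proof.
rewrite /pattern_map; case: (nth false b a); case: (nth false b c);
  case: ((0 < a) && nth false b a.-1); case: ((0 < c) && nth false b c.-1);
  by move=> lt_ac lt_g; first [exfalso; lia | split=> //; lia].
Qed.

(* The default [1] is only used when [b] is not a swap pattern of size [n]. *)
Definition pattern_perm n (b : seq bool) : 'S_n :=
  insubd (1%g : 'S_n) [ffun i : 'I_n => insubd i (pattern_map b i) : 'I_n].

Lemma pattern_permE n b (i : 'I_n) :
  swap_pattern b -> size b = n -> pattern_perm n b i = pattern_map b i :> nat.
Proof.
move=> sw_b sz_b; set f := fun j : 'I_n => insubd j (pattern_map b j).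
have fE j : f j = pattern_map b j :> nat.
  by rewrite val_insubd; have := @pattern_map_lt b j sw_b; rewrite sz_b => /(_ (ltn_ord j)) ->.
have inj_f : injectiveb [ffun j => f j].
  apply/injectiveP => j k; rewrite !ffunE => /(congr1 (fun l : 'I_n => pattern_map b l)).
  by rewrite !fE !pattern_mapK // => /val_inj.
by rewrite -pvalE val_insubd inj_f ffunE fE.
Qed.

Lemma pattern_perm_inj n : {in swap_patterns n &, injective (pattern_perm n)}.
Proof.
move=> b c /mem_swap_patterns [sz_b sw_b] /mem_swap_patterns [sz_c sw_c] eq_bc.
apply: (@eq_from_nth _ false); first by rewrite sz_b sz_c.
move=> k; rewrite sz_b => lt_kn.
rewrite !nth_pattern_map -(pattern_permE (Ordinal lt_kn) sw_b sz_b).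
by rewrite -(pattern_permE (Ordinal lt_kn) sw_c sz_c) eq_bc.
Qed.

Lemma matching_pattern_perm n b :
  swap_pattern b -> size b = n ->
  matching_ordering (transitive_tournament n) (pattern_perm n b)^-1.
Proof.
move=> sw_b sz_b; apply/forallP => v; apply/card_le1_eqP.
have backedge_at_v e : e \in [set e : 'I_n * 'I_n | backedge (transitive_tournament n)
                   (pattern_perm n b)^-1 e.1 e.2 && ((e.1 == v) || (e.2 == v))] ->
    e.2 = e.1.+1 :> nat /\ e.1 = (if nth false b v then nat_of_ord v else v.-1) :> nat.
  case: e => a c; rewrite inE /backedge /position /transitive_tournament /=.
  rewrite invgK !pattern_permE // => /andP [/andP [lt_ac]].
  move=> /(pattern_map_inversion lt_ac) [eq_c b_a] on_v; split=> //.
  case/orP: on_v => /eqP <-; first by rewrite b_a.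
  by move: (sw_b a b_a) => /andP [_ /negbTE]; rewrite eq_c => ->.
move=> [a c] [a' c'] /backedge_at_v /= [eq_c eq_a] /backedge_at_v /= [eq_c' eq_a'].
by congr pair; apply: val_inj; rewrite /= ?eq_c ?eq_c' eq_a eq_a'.
Qed.

Lemma card_ord_lt n a : a <= n -> #|[set i : 'I_n | i < a]| = a.
Proof.
move=> le_an; have -> : [set i : 'I_n | i < a] = widen_ord le_an @: [set: 'I_a].
  apply/setP => i; rewrite inE; apply/idP/imsetP => [lt_ia | [j _ ->]].
    by exists (Ordinal lt_ia) => //; apply: val_inj.
  exact: (ltn_ord j).
by rewrite card_imset ?cardsT ?card_ord // => j k /(congr1 (@nat_of_ord n)) /= /val_inj.
Qed.

Lemma leq_perm_inversions_after n (p : 'S_n) (i : 'I_n) :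
  p i <= i + #|[set j : 'I_n | (i < j) && (p j < p i)]|.
Proof.
rewrite -[X in X <= _](card_ord_lt (ltnW (ltn_ord (p i)))).
rewrite -[X in _ <= X + _](card_ord_lt (ltnW (ltn_ord i))).
rewrite -(card_preimset _ (@perm_inj _ p)).
apply: leq_trans (leq_card_setU _ _).1; apply: subset_leq_card.
apply/subsetP => j; rewrite !inE; case: (ltngtP j i) => //= eq_ji.
by rewrite (val_inj eq_ji) ltnn.
Qed.

Lemma leq_perm_inversions_before n (p : 'S_n) (i : 'I_n) :
  i <= p i + #|[set j : 'I_n | (j < i) && (p i < p j)]|.
Proof.
have := leq_perm_inversions_after p^-1 (p i).
rewrite permK -(card_preimset _ (@perm_inj _ p)).
move/leq_trans; apply; rewrite leq_add2l; apply: subset_leq_card.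
by apply/subsetP => j; rewrite !inE permK andbC.
Qed.

Definition pattern_of n (p : 'S_n) : seq bool := [seq p k == k.+1 :> nat | k <- enum 'I_n].

Lemma size_pattern_of n (p : 'S_n) : size (pattern_of p) = n.
Proof. by rewrite size_map size_enum_ord. Qed.

Lemma nth_pattern_of n (p : 'S_n) (i : 'I_n) :
  nth false (pattern_of p) i = (p i == i.+1 :> nat).
Proof. by rewrite (nth_map i) ?size_enum_ord // nth_ord_enum. Qed.

Section MatchingOrdering.

Variables (n : nat) (sigma : 'S_n).
Hypothesis matching_sigma : matching_ordering (transitive_tournament n) sigma.
Local Notation p := (sigma^-1)%g.

Lemma card_inversions_after_le1 (i : 'I_n) :
  #|[set j : 'I_n | (i < j) && (p j < p i)]| <= 1.
Proof.
move/forallP/(_ i): matching_sigma; apply: leq_trans.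
rewrite -(card_imset _ (@can_inj _ _ (pair i) snd (fun _ => erefl))).
apply: subset_leq_card; apply/subsetP => _ /imsetP [j + ->].
by rewrite !inE eqxx andbT.
Qed.

Lemma card_inversions_before_le1 (i : 'I_n) :
  #|[set j : 'I_n | (j < i) && (p i < p j)]| <= 1.
Proof.
move/forallP/(_ i): matching_sigma; apply: leq_trans.
rewrite -(card_imset _ (@can_inj _ _ (pair^~ i) fst (fun _ => erefl))).
apply: subset_leq_card; apply/subsetP => _ /imsetP [j + ->].
by rewrite !inE eqxx orbT andbT.
Qed.

Lemma matching_position_le (i : 'I_n) : p i <= i.+1.
Proof.
have := leq_perm_inversions_after p i; have := card_inversions_after_le1 i; lia.
Qed.

Lemma matching_position_ge (i : 'I_n) : i <= (p i).+1.
Proof.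
have := leq_perm_inversions_before p i; have := card_inversions_before_le1 i; lia.
Qed.

Lemma matching_swap_succ (i j : 'I_n) :
  j = i.+1 :> nat -> p i = i.+1 :> nat -> p j = i :> nat.
Proof.
move=> eq_j p_i.
have /card_gt0P [k] : 0 < #|[set k : 'I_n | (i < k) && (p k < p i)]|.
  by have := leq_perm_inversions_after p i; lia.
rewrite inE => /andP [lt_ik lt_pk].
have eq_kj : k = j by apply: ord_inj; have := matching_position_ge k; lia.
by move: lt_pk; rewrite eq_kj; have := matching_position_ge j; lia.
Qed.

Lemma matching_swap_pred (i j : 'I_n) :
  j = i.-1 :> nat -> 0 < i -> p i = i.-1 :> nat -> p j = i :> nat.
Proof.
move=> eq_j lt0i p_i.
have /card_gt0P [k] : 0 < #|[set k : 'I_n | (k < i) && (p i < p k)]|.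
  by have := leq_perm_inversions_before p i; lia.
rewrite inE => /andP [lt_ki lt_pk].
have eq_kj : k = j by apply: ord_inj; have := matching_position_le k; lia.
by move: lt_pk; rewrite eq_kj; have := matching_position_le j; lia.
Qed.

Lemma swap_pattern_of : swap_pattern (pattern_of p).
Proof.
move=> k b_k; have lt_kn : k < n.
  rewrite -(size_pattern_of p); apply: contraTT b_k.
  by rewrite -leqNgt => /(nth_default false) ->.
move: b_k; rewrite (nth_pattern_of p (Ordinal lt_kn)) size_pattern_of => /eqP /= p_k.
have lt_k1n : k.+1 < n by rewrite -p_k ltn_ord.
rewrite lt_k1n (nth_pattern_of p (Ordinal lt_k1n)) /=.
by rewrite (matching_swap_succ (i := Ordinal lt_kn)) //=; lia.
Qed.

Lemma pattern_of_matching : pattern_perm n (pattern_of p) = p.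
Proof.
apply/permP => i; apply: ord_inj.
rewrite pattern_permE ?size_pattern_of //; last exact: swap_pattern_of.
rewrite /pattern_map nth_pattern_of.
have le_pi := matching_position_le i.
have ge_pi := matching_position_ge i.
case: eqP => [-> // | ne_pi_succ].
case: (posnP i) => [i0 | lt0i] /=; first by lia.
have lt_i1n : i.-1 < n by have := ltn_ord i; lia.
rewrite (nth_pattern_of p (Ordinal lt_i1n)) /= prednK //.
case: eqP => [p_i1 | ne_p_i1].
  have : p (Ordinal lt_i1n) != p i by rewrite (inj_eq perm_inj) -val_eqE /=; lia.
  by rewrite -val_eqE /= p_i1; lia.
case: (ltngtP (p i) i) => [lt_pi | lt_ip | //]; last by lia.
by have := matching_swap_pred (j := Ordinal lt_i1n) erefl lt0i; lia.
Qed.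

End MatchingOrdering.

Theorem corollary5p7 (n : nat) : (1 <= n)%N ->
  #|[set sigma : 'S_n | matching_ordering (transitive_tournament n) sigma]| = fib n.
Proof.
(* The count also holds for n = 0: the empty permutation is a matching ordering. *)
move=> _.
rewrite -size_swap_patterns -(size_map (fun b => (pattern_perm n b)^-1)%g).
have uniq_inv_perms : uniq [seq (pattern_perm n b)^-1%g | b <- swap_patterns n].
  rewrite map_inj_in_uniq ?uniq_swap_patterns // => b c b_in c_in /invg_inj.
  exact: pattern_perm_inj b_in c_in.
rewrite -(card_uniqP uniq_inv_perms).
apply: eq_card => sigma; rewrite inE; apply/idP/mapP => [matching_sigma | [b]].
  exists (pattern_of sigma^-1); last by rewrite pattern_of_matching ?invgK.
  by apply/mem_swap_patterns; split; [exact: size_pattern_of | exact: swap_pattern_of].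
by case/mem_swap_patterns => sz_b sw_b ->; exact: matching_pattern_perm.
Qed.
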